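(* Let \[P=\{(x,y)\in[0,3]^3\times[0,1]^3 : x_1+x_2+x_3=4,\ x_i\le 4y_i \text{ for } i=1,2,3\},\] \[P_U=\{(x,y,z)\in\mathbb{R}^3\times\mathbb{R}^3\times[0,1]^{3\times3} : (x,y)\in P,\ x_i=z_{i1}+2z_{i2}+3z_{i3},\ z_{i1}+z_{i2}+z_{i3}\le1 \text{ for } i=1,2,3\},\] \[P_{L+}=\{(x,y,z)\in\mathbb{R}^3\times\mathbb{R}^3\times[0,1]^{3\times2} : (x,y)\in P,\ x_i=z_{i1}+2z_{i2} \text{ for } i=1,2,3\},\] where all variables ($x$, $y$ and $z$) are integer variables. Then \[\operatorname{proj}_{x,y}\big(\mathrm{SC}(P_U)\big)\subsetneq\operatorname{proj}_{x,y}\big(\mathrm{SC}(P_{L+})\big).\]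
   Context: For $X\subseteq\mathbb{R}^N$ with all coordinates integer, the split closure is $\mathrm{SC}(X)=\bigcap\mathrm{conv}(X\setminus S)$, the intersection over all split sets $S=\{w\in\mathbb{R}^N:\pi_0<\pi^Tw<\pi_0+1\}$ with $\pi\in\mathbb{Z}^N$, $\pi_0\in\mathbb{Z}$. $\operatorname{proj}_{x,y}$ is orthogonal projection onto the $(x,y)$-coordinates. *)

From HB Require Import structures.
From mathcomp Require Import all_boot all_order all_algebra.
From mathcomp Require Import reals.
Set Implicit Arguments. Unset Strict Implicit. Unset Printing Implicit Defensive.
Import Order.TTheory GRing.Theory Num.Theory.
Local Open Scope ring_scope.

Definition conv (R : realType) (N : nat) (A : ('I_N -> R) -> Prop) (x : 'I_N -> R) : Prop :=
  exists (n : nat) (lam : 'I_n -> R) (p : 'I_n -> 'I_N -> R),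
    (forall i, 0 <= lam i) /\ \sum_(i < n) lam i = 1 /\
    (forall i, A (p i)) /\ (forall k, x k = \sum_(i < n) lam i * p i k).

Definition in_split (R : realType) (N : nat) (pi : 'I_N -> int) (pi0 : int) (w : 'I_N -> R) : Prop :=
  pi0%:~R < \sum_(k < N) (pi k)%:~R * w k < (pi0 + 1)%:~R.

Definition SC (R : realType) (N : nat) (X : ('I_N -> R) -> Prop) (x : 'I_N -> R) : Prop :=
  forall (pi : 'I_N -> int) (pi0 : int),
    conv (fun w => X w /\ ~ in_split pi pi0 w) x.

Definition coord (R : realType) (n : nat) (w : 'I_n.+1 -> R) (k : nat) : R := w (inord k).

Definition proj_xy (R : realType) (n : nat) (A : ('I_n.+1 -> R) -> Prop) (u : 'I_6 -> R) : Prop :=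
  exists w, A w /\ forall k : 'I_6, coord w k = u k.

Definition inP (R : realType) (x y : nat -> R) : Prop :=
  (forall i : 'I_3, 0 <= x i <= 3 /\ 0 <= y i <= 1) /\
  x 0%N + x 1%N + x 2%N = 4 /\
  (forall i : 'I_3, x i <= 4 * y i).

(* P_U in R^15: coordinates 0..2 = x, 3..5 = y, 6+3i+j = z_{i+1,j+1}. *)
Definition P_U (R : realType) (w : 'I_15 -> R) : Prop :=
  let x := fun i => coord w i in
  let y := fun i => coord w (3 + i) in
  let z := fun i j => coord w (6 + 3 * i + j) in
  inP x y /\
  (forall (i j : 'I_3), 0 <= z i j <= 1) /\
  (forall i : 'I_3, x i = z i 0%N + 2 * z i 1%N + 3 * z i 2%N) /\
  (forall i : 'I_3, z i 0%N + z i 1%N + z i 2%N <= 1).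

(* P_{L+} in R^12: coordinates 0..2 = x, 3..5 = y, 6+2i+j = z_{i+1,j+1}. *)
Definition P_Lplus (R : realType) (w : 'I_12 -> R) : Prop :=
  let x := fun i => coord w i in
  let y := fun i => coord w (3 + i) in
  let z := fun i j => coord w (6 + 2 * i + j) in
  inP x y /\
  (forall (i : 'I_3) (j : 'I_2), 0 <= z i j <= 1) /\
  (forall i : 'I_3, x i = z i 0%N + 2 * z i 1%N).

(* The map (x, y, z) |-> (x, y, z') with z'_i1 = z_i1 + z_i3 and z'_i2 = z_i2 + z_i3 is
   integral and linear and sends P_U into P_L+, and the preimage of a split set under an
   integral linear map is again a split set, so the map carries SC(P_U) into SC(P_L+)
   without moving (x, y).

   The point u = (3/2, 3/2, 1, 1/2, 1/2, 1/2) separates the two projections.  It lifts to a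
   half-integral point w of P_L+ such that w +- d_j/2 lie in P_L+ for three integral
   directions d_j with w - (d_1 + d_2 + d_3)/2 integral.  A split whose interior contains w
   has pi.w = pi0 + 1/2, hence pi.d_j <> 0 for some j, and then w is the midpoint of two
   points of P_L+ outside the split: w lies in SC(P_L+).  On the other side, the
   Chvatal-Gomory cuts z_i1 + z_i2 + z_i3 <= y_i and z_13 + z_23 + z_32 + z_33 <= 1 are valid
   for SC(P_U); with y = 1/2 and x_1 = x_2 = 3/2 they force z_13 = z_23 = 1/2, hence
   z_32 = z_33 = 0 and x_3 <= 1/2 < 1. *)

From Pilot Require Import Defs.
From HB Require Import structures.
From mathcomp Require Import all_boot all_order all_algebra.
From mathcomp Require Import reals lra zify.
Set Implicit Arguments. Unset Strict Implicit. Unset Printing Implicit Defensive.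
Import Order.TTheory GRing.Theory Num.Theory.
Local Open Scope ring_scope.

Local Notation coord := Defs.coord.

Section SplitClosure.
Variable R : realType.

Definition dot N (pi : 'I_N -> int) (v : 'I_N -> R) : R := \sum_k (pi k)%:~R * v k.

Definition intform N (f : ('I_N -> R) -> R) : Prop := exists pi, forall v, f v = dot pi v.

Lemma intform_coord n k : intform (fun v : 'I_n.+1 -> R => coord v k).
Proof.
exists (fun l => (l == inord k)%:R) => v; rewrite /dot (bigD1 (inord k)) //= eqxx mul1r.
by rewrite big1 ?addr0 // => l /negbTE ->; rewrite mul0r.
Qed.

Lemma intformD N (f g : ('I_N -> R) -> R) :
  intform f -> intform g -> intform (fun v => f v + g v).
Proof.
move=> [pi Hf] [rho Hg]; exists (fun k => pi k + rho k) => v.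
by rewrite Hf Hg /dot -big_split; apply: eq_bigr => k _; rewrite intrD mulrDl.
Qed.

Lemma intformN N (f : ('I_N -> R) -> R) : intform f -> intform (fun v => - f v).
Proof.
move=> [pi Hf]; exists (fun k => - pi k) => v.
by rewrite Hf /dot -sumrN; apply: eq_bigr => k _; rewrite intrN mulNr.
Qed.

Lemma intformMn N n (f : ('I_N -> R) -> R) : intform f -> intform (fun v => n%:R * f v).
Proof.
move=> [pi Hf]; exists (fun k => n%:Z * pi k) => v.
by rewrite Hf /dot mulr_sumr; apply: eq_bigr => k _; rewrite intrM mulrA.
Qed.

Lemma intform_conv N (f : ('I_N -> R) -> R) n (lam : 'I_n -> R) p x :
  intform f -> (forall k, x k = \sum_i lam i * p i k) ->
  f x = \sum_i lam i * f (p i).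
Proof.
move=> [pi Hf] Hx; rewrite Hf /dot.
under eq_bigr => k _ do rewrite Hx mulr_sumr.
rewrite exchange_big; apply: eq_bigr => i _; rewrite Hf /dot mulr_sumr.
by apply: eq_bigr => k _; rewrite mulrCA.
Qed.

Lemma conv_le N (A : ('I_N -> R) -> Prop) f b x :
  intform f -> (forall v, A v -> f v <= b) -> conv A x -> f x <= b.
Proof.
move=> Hf HA [n [lam [p [lam_ge0 [lam_sum [Ap Hx]]]]]].
rewrite (intform_conv Hf Hx) -[b]mul1r -lam_sum mulr_suml.
by apply: ler_sum => i _; rewrite ler_wpM2l // HA.
Qed.

Lemma SC_le N (A : ('I_N -> R) -> Prop) pi pi0 f b :
  intform f -> (forall v, A v -> ~ in_split pi pi0 v -> f v <= b) ->
  forall x, SC A x -> f x <= b.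
Proof. by move=> Hf HA x /(_ pi pi0); apply: conv_le => // v []; apply: HA. Qed.

Lemma SC_valid N (A : ('I_N -> R) -> Prop) f b :
  intform f -> (forall v, A v -> f v <= b) -> forall x, SC A x -> f x <= b.
Proof. by move=> Hf HA; apply: (SC_le (pi := fun=> 0) (pi0 := 0) Hf) => v /HA. Qed.

Lemma SC_CG_cut N (A : ('I_N -> R) -> Prop) f (b : int) :
  intform f -> (forall v, A v -> f v < b%:~R + 1) -> forall x, SC A x -> f x <= b%:~R.
Proof.
move=> Hf HA; have [pi Hpi] := Hf; apply: (SC_le (pi := pi) (pi0 := b) Hf) => v Av.
rewrite /in_split -/(dot pi v) -Hpi => Hout; rewrite leNgt; apply/negP => lt_bf.
by apply: Hout; rewrite lt_bf intrD HA.
Qed.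

Lemma SC_image N1 N2 (A : ('I_N1 -> R) -> Prop) (B : ('I_N2 -> R) -> Prop)
    (F : ('I_N1 -> R) -> 'I_N2 -> R) x :
  (forall k, intform (fun v => F v k)) -> (forall v, A v -> B (F v)) ->
  SC A x -> SC B (F x).
Proof.
move=> HF HAB Hx pi pi0.
have [M HM] := fin_all_exists HF.
pose rho l := \sum_k pi k * M k l.
have Hrho v : dot pi (F v) = dot rho v.
  rewrite /dot; under eq_bigr => k _ do rewrite HM /dot mulr_sumr.
  rewrite exchange_big; apply: eq_bigr => l _; rewrite rmorph_sum mulr_suml.
  by apply: eq_bigr => k _; rewrite rmorphM /= mulrA.
have [n [lam [p [lam_ge0 [lam_sum [Ap Hp]]]]]] := Hx rho pi0.
exists n, lam, (fun i => F (p i)); do 2!split => //; split.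
  by move=> i; have [Api Hs] := Ap i; split; [exact: HAB | rewrite /in_split -/(dot _ _) Hrho].
by move=> k; apply: (intform_conv (HF k) Hp).
Qed.

Lemma conv_of N (A : ('I_N -> R) -> Prop) x : A x -> conv A x.
Proof.
move=> Ax; exists 1%N, (fun=> 1), (fun=> x); rewrite big_ord1; do 3!split => //.
by move=> k; rewrite big_ord1 mul1r.
Qed.

Lemma conv_midpoint N (A : ('I_N -> R) -> Prop) p q x :
  A p -> A q -> (forall k, x k = (p k + q k) / 2) -> conv A x.
Proof.
move=> Ap Aq Hx; exists 2%N, (fun=> 2^-1), (fun i : 'I_2 => if val i == 0%N then p else q).
split=> [_|]; first by rewrite invr_ge0 ler0n.
split; first by rewrite big_ord_recr big_ord1 /=; lra.
split=> [i|k]; first by case: ifP.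
by rewrite Hx big_ord_recr big_ord1 /=; lra.
Qed.

Definition half_vec N (a : 'I_N -> int) : 'I_N -> R := fun k => (a k)%:~R / 2.

Lemma in_split_half_vec N pi pi0 (a : 'I_N -> int) :
  in_split pi pi0 (half_vec a) <-> (2 * pi0 < \sum_k pi k * a k < 2 * pi0 + 2).
Proof.
rewrite /in_split -/(dot pi _).
have -> : dot pi (half_vec a) = (\sum_k pi k * a k)%:~R / 2.
  rewrite /dot rmorph_sum mulr_suml; apply: eq_bigr => k _.
  by rewrite /half_vec rmorphM /= mulrA.
rewrite ltr_pdivlMr ?ltr_pdivrMr ?ltr0n // -!(ltr_int R) !rmorphD !rmorphM /=.
by split=> /andP[lt1 lt2]; apply/andP; split; lra.
Qed.

Lemma SC_half_integral N (A : ('I_N -> R) -> Prop) m (a : 'I_N -> int)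
    (d : 'I_m -> 'I_N -> int) :
  (forall k, (2 %| a k - \sum_j d j k)%Z) ->
  A (half_vec a) ->
  (forall j, A (half_vec (fun k => a k + d j k))) ->
  (forall j, A (half_vec (fun k => a k - d j k))) ->
  SC A (half_vec a).
Proof.
move=> a_par Aa Aplus Aminus pi pi0.
pose P := \sum_k pi k * a k; pose s j := \sum_k pi k * d j k.
have [/andP[lt1 lt2]|out] := boolP (2 * pi0 < P < 2 * pi0 + 2); last first.
  by apply: conv_of; split=> // /in_split_half_vec; apply/negP.
have [j sj_neq0] : exists j, s j != 0.
  case: (pickP (fun j => s j != 0)) => [j sj|s0]; first by exists j.
  have : (2 %| P - \sum_j s j)%Z.
    have -> : P - \sum_j s j = \sum_k pi k * (a k - \sum_j d j k).
      rewrite /P /s exchange_big /= -sumrB; apply: eq_bigr => k _.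
      by rewrite mulrBr mulr_sumr.
    by apply: rpred_sum => k _; apply: dvdz_mull.
  rewrite big1 => [|i _]; last by apply/eqP; rewrite -[_ == _]negbK s0.
  by rewrite subr0; lia.
have sum_pm (c : int) : \sum_k pi k * (a k + c * d j k) = P + c * s j.
  by rewrite /P /s mulr_sumr -big_split; apply: eq_bigr => k _; rewrite mulrCA mulrDr.
apply: (conv_midpoint (p := half_vec (fun k => a k + d j k))
                      (q := half_vec (fun k => a k - d j k))).
- split=> // /in_split_half_vec; have := sum_pm 1.
  under eq_bigr => k _ do rewrite mul1r.
  by rewrite mul1r => ->; lia.
- split=> // /in_split_half_vec; have := sum_pm (-1).
  under eq_bigr => k _ do rewrite mulN1r.
  by rewrite mulN1r => ->; lia.
- by move=> k; rewrite /half_vec rmorphD rmorphB /=; lra.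
Qed.

End SplitClosure.

Ltac solve_intform := repeat first
  [apply: intformD | apply: intformN | apply: intformMn | apply: intform_coord].

Section SplitClosuresOfP_UandP_Lplus.
Variable R : realType.

Lemma P_U_row (v : 'I_15 -> R) (i : 'I_3) : P_U v ->
  0 <= coord v (3 + i) /\ coord v i <= 4 * coord v (3 + i) /\
  coord v i = coord v (6 + 3 * i + 0) + 2 * coord v (6 + 3 * i + 1) + 3 * coord v (6 + 3 * i + 2) /\
  coord v (6 + 3 * i + 0) + coord v (6 + 3 * i + 1) + coord v (6 + 3 * i + 2) <= 1 /\
  0 <= coord v (6 + 3 * i + 0) /\ 0 <= coord v (6 + 3 * i + 1) /\ 0 <= coord v (6 + 3 * i + 2).
Proof.
move=> [[Hb [_ Hxy]] [Hz [Hx Hs]]]; have [_ /andP[y0 _]] := Hb i.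
have [[/andP[z0 _] /andP[z1 _]] /andP[z2 _]] :=
  (Hz i (@Ordinal 3 0 isT), Hz i (@Ordinal 3 1 isT), Hz i (@Ordinal 3 2 isT)).
by do !split.
Qed.

Lemma P_U_x_sum (v : 'I_15 -> R) : P_U v -> coord v 0 + coord v 1 + coord v 2 = 4.
Proof. by case=> [[_ []]]. Qed.

Lemma inP_ext (x y x' y' : nat -> R) :
  (forall i, (i < 3)%N -> x' i = x i /\ y' i = y i) -> inP x y -> inP x' y'.
Proof.
move=> E [Hb [Hs Hxy]]; have [[[E0 _] [E1 _]] [E2 _]] := (E 0%N isT, E 1%N isT, E 2%N isT).
split; first by move=> i; have [-> ->] := E i (ltn_ord i); apply: Hb.
by rewrite E0 E1 E2; split=> // i; have [-> ->] := E i (ltn_ord i); apply: Hxy.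
Qed.

(* Coordinate 6 + 2i + j of the image (0-based i, j) is z_ij + z_i2 of P_U. *)
Definition merge_z (v : 'I_15 -> R) : 'I_12 -> R := fun k =>
  let i := ((k - 6) %/ 2)%N in
  if (k < 6)%N then coord v k
  else coord v (6 + 3 * i + (k - 6) %% 2)%N + coord v (6 + 3 * i + 2)%N.

Lemma merge_z_intform k : intform (fun v => merge_z v k).
Proof. by rewrite /merge_z; case: (k < 6)%N; solve_intform. Qed.

Lemma coord_merge_z_xy v k : (k < 6)%N -> coord (merge_z v) k = coord v k.
Proof. by move=> lt_k6; rewrite /coord /merge_z inordK ?lt_k6 //; apply: ltn_trans lt_k6 _. Qed.

Lemma coord_merge_z_z v i j : (i < 3)%N -> (j < 2)%N ->
  coord (merge_z v) (6 + 2 * i + j) = coord v (6 + 3 * i + j) + coord v (6 + 3 * i + 2).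
Proof.
move=> lt_i3 lt_j2; rewrite /coord /merge_z inordK; last by lia.
have -> : (6 + 2 * i + j < 6)%N = false by lia.
have -> : ((6 + 2 * i + j - 6) %/ 2 = i)%N by lia.
by have -> : ((6 + 2 * i + j - 6) %% 2 = j)%N by lia.
Qed.

Lemma merge_z_P_Lplus v : P_U v -> P_Lplus (merge_z v).
Proof.
move=> Pv; split; [|split].
- apply: inP_ext Pv.1 => i lt_i3.
  by rewrite !coord_merge_z_xy //; apply: leq_trans lt_i3 _.
- move=> i j; rewrite coord_merge_z_z //.
  have := P_U_row i Pv; case: j => [[|[|//]] ?] /= row; apply/andP; split; lra.
- move=> i; rewrite coord_merge_z_xy ?(leq_trans (ltn_ord i)) // !coord_merge_z_z //.
  have := P_U_row i Pv; lra.
Qed.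

Lemma proj_SC_P_U_sub u : proj_xy (SC (@P_U R)) u -> proj_xy (SC (@P_Lplus R)) u.
Proof.
case=> w [Hw Hu]; exists (merge_z w); split.
  exact: SC_image merge_z_intform merge_z_P_Lplus Hw.
by move=> k; rewrite coord_merge_z_xy ?Hu.
Qed.

Definition u_sep : 'I_6 -> R := half_vec R (fun k : 'I_6 => nth 0 [:: 3; 3; 2; 1; 1; 1] k).

Lemma all_iotaP n (P : pred nat) : all P (iota 0 n) -> forall k, (k < n)%N -> P k.
Proof. by move=> /allP H k lt_kn; apply: H; rewrite mem_iota. Qed.

Lemma coord_half_vec n (b : nat -> int) k : (k < n.+1)%N ->
  coord (half_vec R (fun l : 'I_n.+1 => b l)) k = (b k)%:~R / 2.
Proof. by move=> lt_kn; rewrite /coord /half_vec inordK. Qed.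

(* Indices are natural numbers and quantifiers run over [iota] so that the test evaluates:
   neither [inord] nor [forall] over an ordinal reduces by computation. *)
Definition P_Lplus_int (b : nat -> int) : bool :=
  let x i := b i in let y i := b (3 + i)%N in let z i j := b (6 + 2 * i + j)%N in
  all (fun i => [&& 0 <= x i <= 6, 0 <= y i <= 2, x i <= 4 * y i,
                    x i == z i 0%N + 2 * z i 1%N & all (fun j => 0 <= z i j <= 2) (iota 0 2)])
      (iota 0 3)
  && (x 0%N + x 1%N + x 2%N == 8).

Lemma P_Lplus_half_vec b : P_Lplus_int b -> P_Lplus (half_vec R (fun k : 'I_12 => b k)).
Proof.
have le_int (p q : int) : p <= q -> p%:~R <= q%:~R :> R by rewrite ler_int.
have eq_int (p q : int) : p == q -> p%:~R = q%:~R :> R by move/eqP->.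
move=> /andP[/all_iotaP rows /eq_int sum8].
have {}rows (i : 'I_3) := rows i (ltn_ord i).
split; [split; [|split]|split].
- move=> i; have /and5P[/andP[/le_int x0 /le_int x6] /andP[/le_int y0 /le_int y2] _ _ _] := rows i.
  have lt_i3 := ltn_ord i; rewrite !coord_half_vec; try lia.
  by split; apply/andP; split; lra.
- by rewrite !coord_half_vec //; move: sum8; rewrite !rmorphD /=; lra.
- move=> i; have /and5P[_ _ /le_int + _ _] := rows i.
  have lt_i3 := ltn_ord i; rewrite !coord_half_vec; try lia.
  rewrite rmorphM /=; lra.
- move=> i j; have /and5P[_ _ _ _ /all_iotaP /(_ j (ltn_ord j)) z_bounds] := rows i.
  move: z_bounds => /andP[/le_int z0 /le_int z2].
  have lt_i3 := ltn_ord i; have lt_j2 := ltn_ord j; rewrite !coord_half_vec; try lia.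
  by apply/andP; split; lra.
- move=> i; have /and5P[_ _ _ /eq_int + _] := rows i.
  have lt_i3 := ltn_ord i; rewrite !coord_half_vec; try lia.
  rewrite rmorphD rmorphM /=; lra.
Qed.

(* a_L = 2 w for the lift w of u_sep with z' = (1/2, 1/2 | 1/2, 1/2 | 0, 1/2); the vector
   a_L - (d_L 0 + d_L 1 + d_L 2) is even. *)
Definition a_L (k : nat) : int := nth 0 [:: 3; 3; 2; 1; 1; 1; 1; 1; 1; 1; 0; 1] k.

Definition d_L (j k : nat) : int := nth 0 (nth [::]
  [:: [:: -3; 1; 2; -1; 0; 0; -1; -1; -1; 1; 0; 1];
      [:: 1; -3; 2; 0; -1; 0; -1; 1; -1; -1; 0; 1];
      [:: 1; 1; -2; 0; 0; -1; -1; 1; -1; 1; 0; -1]] j) k.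

Lemma SC_P_Lplus_half_a_L : SC (@P_Lplus R) (half_vec R (fun k : 'I_12 => a_L k)).
Proof.
apply: (SC_half_integral (d := fun (j : 'I_3) (k : 'I_12) => d_L j k))
  => [[k lt_k]||[j lt_j]|[j lt_j]].
- by rewrite !big_ord_recr big_ord0 /=; move: k lt_k; apply: all_iotaP.
- by apply: P_Lplus_half_vec.
- apply: (P_Lplus_half_vec (b := fun k => a_L k + d_L j k)).
  by move: j lt_j; apply: all_iotaP.
- apply: (P_Lplus_half_vec (b := fun k => a_L k - d_L j k)).
  by move: j lt_j; apply: all_iotaP.
Qed.

Lemma u_sep_in_proj_SC_P_Lplus : proj_xy (SC (@P_Lplus R)) u_sep.
Proof.
exists (half_vec R (fun k : 'I_12 => a_L k)); split; first exact: SC_P_Lplus_half_a_L.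
move=> k; rewrite coord_half_vec; last exact: ltn_trans (ltn_ord k) _.
by case: k => [[|[|[|[|[|[|//]]]]]] ?].
Qed.

Implicit Type w : 'I_15 -> R.

Lemma SC_P_U_x_le (i : 'I_3) w : SC (@P_U R) w ->
  coord w i <= coord w (6 + 3 * i + 0) + 2 * coord w (6 + 3 * i + 1) + 3 * coord w (6 + 3 * i + 2).
Proof.
move=> Hw; rewrite -subr_le0; move: w Hw.
by apply: SC_valid => [|v /(P_U_row i)]; [solve_intform | lra].
Qed.

Lemma SC_P_U_z_ge0 (i j : 'I_3) w : SC (@P_U R) w -> 0 <= coord w (6 + 3 * i + j).
Proof.
move=> Hw; rewrite -oppr_le0; move: w Hw.
apply: SC_valid => [|v /(P_U_row i)]; first by solve_intform.
by case: j => [[|[|[|//]]] ?]; lra.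
Qed.

Lemma SC_P_U_z_row_le_y (i : 'I_3) w : SC (@P_U R) w ->
  coord w (6 + 3 * i + 0) + coord w (6 + 3 * i + 1) + coord w (6 + 3 * i + 2) <= coord w (3 + i).
Proof.
move=> Hw; rewrite -subr_le0; move: w Hw.
by apply: (SC_CG_cut (b := 0)) => [|v /(P_U_row i)]; [solve_intform | lra].
Qed.

(* On P_U, with S the left-hand side, 4 = x_1 + x_2 + x_3 >= 2 S + z_13 + z_23; so S >= 2
   would force z_13 = z_23 = 0 and z_32 + z_33 >= 2, against the row constraint. *)
Lemma SC_P_U_top_cut w : SC (@P_U R) w -> coord w 8 + coord w 11 + coord w 13 + coord w 14 <= 1.
Proof.
move: w; apply: (SC_CG_cut (b := 1)) => [|v Pv]; first by solve_intform.
have := P_U_x_sum Pv; have := P_U_row (@Ordinal 3 0 isT) Pv.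
have := P_U_row (@Ordinal 3 1 isT) Pv; have := P_U_row (@Ordinal 3 2 isT) Pv.
lra.
Qed.

Lemma u_sep_notin_proj_SC_P_U : ~ proj_xy (SC (@P_U R)) u_sep.
Proof.
case=> w [Hw Hu].
have := Hu (@Ordinal 6 0 isT); have := Hu (@Ordinal 6 1 isT); have := Hu (@Ordinal 6 2 isT).
have := Hu (@Ordinal 6 3 isT); have := Hu (@Ordinal 6 4 isT); have := Hu (@Ordinal 6 5 isT).
rewrite /u_sep /half_vec /=.
have := SC_P_U_top_cut Hw.
have := SC_P_U_z_row_le_y (@Ordinal 3 0 isT) Hw; have := SC_P_U_z_row_le_y (@Ordinal 3 1 isT) Hw.
have := SC_P_U_z_row_le_y (@Ordinal 3 2 isT) Hw.
have := SC_P_U_x_le (@Ordinal 3 0 isT) Hw; have := SC_P_U_x_le (@Ordinal 3 1 isT) Hw.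
have := SC_P_U_x_le (@Ordinal 3 2 isT) Hw.
have := SC_P_U_z_ge0 (@Ordinal 3 0 isT) (@Ordinal 3 0 isT) Hw.
have := SC_P_U_z_ge0 (@Ordinal 3 0 isT) (@Ordinal 3 1 isT) Hw.
have := SC_P_U_z_ge0 (@Ordinal 3 1 isT) (@Ordinal 3 0 isT) Hw.
have := SC_P_U_z_ge0 (@Ordinal 3 1 isT) (@Ordinal 3 1 isT) Hw.
have := SC_P_U_z_ge0 (@Ordinal 3 2 isT) (@Ordinal 3 1 isT) Hw.
lra.
Qed.

End SplitClosuresOfP_UandP_Lplus.

Theorem theorem5 (R : realType) :
  (forall u : 'I_6 -> R, proj_xy (SC (@P_U R)) u -> proj_xy (SC (@P_Lplus R)) u) /\
  (exists u : 'I_6 -> R, proj_xy (SC (@P_Lplus R)) u /\ ~ proj_xy (SC (@P_U R)) u).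
Proof.
split; first exact: proj_SC_P_U_sub.
by exists (u_sep R); split; [exact: u_sep_in_proj_SC_P_Lplus | exact: u_sep_notin_proj_SC_P_U].
Qed.
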